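(* Let $\kappa$ be a regular cardinal with $\kappa\ge\aleph_2$. If there is a $(\kappa\times\omega_1)$-Prikry matrix, then $\binom{\kappa}{\aleph_1}\nrightarrow\binom{\aleph_0}{\aleph_1}_2$.
   Context: Work in ZFC. For a regular $\kappa\ge\aleph_2$, a $(\kappa\times\omega_1)$-Prikry matrix is a family $(A_{\alpha,\eta}:\alpha\in\kappa,\eta\in\omega_1)$ of subsets of $\omega_1$ such that: (i) for every $\alpha\in\kappa$ and $\zeta<\eta<\omega_1$, $A_{\alpha,\zeta}\cap A_{\alpha,\eta}=\varnothing$; (ii) for every $\alpha\in\kappa$, $\bigcup_{\eta\in\omega_1}A_{\alpha,\eta}=\omega_1$; (iii) for every sequence of pairwise distinct $\alpha_n\in\kappa$ ($n\in\omega$) and every sequence $(\eta_n:n\in\omega)$ of elements of $\omega_1$ (repetitions allowed), $|\omega_1\setminus\bigcup_{n\in\omega}A_{\alpha_n,\eta_n}|\le\aleph_0$. The relation $\binom{\lambda}{\kappa}\rightarrow\binom{\alpha}{\beta}_\chi$ means: for every $c:\lambda\times\kappa\rightarrow\chi$ there are $A\subseteq\lambda$, $B\subseteq\kappa$ with ${\rm otp}(A)=\alpha$, ${\rm otp}(B)=\beta$ and $c\upharpoonright(A\times B)$ constant; $\nrightarrow$ is its negation. *)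

(* Ordinals/cardinals are represented by well-ordered types. *)
From Stdlib Require Import Arith Wellfounded.

Definition is_well_order {T : Type} (lt : T -> T -> Prop) : Prop :=
  (forall x, ~ lt x x) /\
  (forall x y z, lt x y -> lt y z -> lt x z) /\
  (forall x y, lt x y \/ x = y \/ lt y x) /\
  well_founded lt.

Definition countable_set {T : Type} (P : T -> Prop) : Prop :=
  exists f : T -> nat, forall x y, P x -> P y -> f x = f y -> x = y.

(* (W, lt) is (order-isomorphic to) omega_1: a well-order which is uncountable
   while all its proper initial segments are countable. *)
Definition is_omega1 {W : Type} (lt : W -> W -> Prop) : Prop :=
  is_well_order lt /\
  ~ countable_set (fun _ : W => True) /\
  (forall y : W, countable_set (fun x => lt x y)).

(* (K, ltK) is (order-isomorphic to) a regular cardinal kappa >= aleph_2,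
   where (W, ltW) is omega_1:
   - well-order;
   - initial ordinal: K does not inject into any proper initial segment;
   - kappa >= aleph_2: K does not inject into omega_1;
   - regular: every cofinal subset of K has cardinality kappa. *)
Definition is_regular_cardinal_ge_aleph2 {K W : Type}
  (ltK : K -> K -> Prop) (ltW : W -> W -> Prop) : Prop :=
  is_well_order ltK /\
  (forall y : K, ~ exists f : K -> K,
       (forall x, ltK (f x) y) /\ (forall x x', f x = f x' -> x = x')) /\
  (~ exists f : K -> W, forall x x', f x = f x' -> x = x') /\
  (forall S : K -> Prop, (forall x, exists y, S y /\ ~ ltK y x) ->
     exists f : K -> K, (forall x, S (f x)) /\ (forall x x', f x = f x' -> x = x')).

Definition prikry_matrix {K W : Type} (ltW : W -> W -> Prop)
  (A : K -> W -> W -> Prop) : Prop :=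
  (forall a z e x, ltW z e -> A a z x -> A a e x -> False) /\
  (forall a x, exists e, A a e x) /\
  (forall (al : nat -> K) (et : nat -> W),
     (forall n m, al n = al m -> n = m) ->
     countable_set (fun x => ~ exists n, A (al n) (et n) x)).

Definition otp_omega {K : Type} (ltK : K -> K -> Prop) (X : K -> Prop) : Prop :=
  exists f : nat -> K, (forall n m, n < m -> ltK (f n) (f m)) /\
    (forall x, X x <-> exists n, f n = x).

Definition otp_omega1 {W : Type} (ltW : W -> W -> Prop) (Y : W -> Prop) : Prop :=
  exists g : W -> W, (forall a b, ltW a b -> ltW (g a) (g b)) /\
    (forall y, Y y <-> exists a, g a = y).

Definition not_polarized_arrow {K W : Type}
  (ltK : K -> K -> Prop) (ltW : W -> W -> Prop) : Prop :=
  exists c : K -> W -> bool,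
    forall (X : K -> Prop) (Y : W -> Prop),
      otp_omega ltK X -> otp_omega1 ltW Y ->
      ~ exists i : bool, forall x y, X x -> Y y -> c x y = i.

From Stdlib Require Import Classical ClassicalEpsilon PeanoNat.

(* Colour (α, x) by whether x lies in the e0-th column A_{α,e0}.  Given
   distinct α_n and an uncountable Y, condition (iii) with the constant
   sequence η_n = η says that the columns A_{α_n,η} cover all but countably
   many points, so Y meets one of them.  Taking η = e0 yields colour true;
   taking η = e1 ≠ e0 yields, by disjointness, colour false. *)

Definition injective {A B : Type} (f : A -> B) : Prop :=
  forall x y, f x = f y -> x = y.

Lemma strict_mono_injective {A B : Type} (ltA : A -> A -> Prop)
    (ltB : B -> B -> Prop) (f : A -> B) :
  (forall x y, ltA x y \/ x = y \/ ltA y x) ->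
  (forall y, ~ ltB y y) ->
  (forall x y, ltA x y -> ltB (f x) (f y)) ->
  injective f.
Proof.
  intros Htri Hirr Hmono x y Efxy.
  destruct (Htri x y) as [Hlt | [Heq | Hlt]]; trivial;
    apply Hmono in Hlt; rewrite Efxy in Hlt; destruct (Hirr _ Hlt).
Qed.

Lemma uncountable_two_points {W : Type} :
  ~ countable_set (fun _ : W => True) -> exists e0 e1 : W, e0 <> e1.
Proof.
  intros Hunc. apply NNPP; intros Hsub. apply Hunc.
  exists (fun _ => 0). intros x y _ _ _.
  apply NNPP; intros Hxy. apply Hsub; eauto.
Qed.

Lemma countable_preimage {V W : Type} (S : W -> Prop) (g : V -> W) :
  injective g -> countable_set S -> countable_set (fun v => S (g v)).
Proof.
  intros Hg [h Hh]. exists (fun v => h (g v)).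
  intros v v' Sv Sv' E. apply Hg, Hh; assumption.
Qed.

Lemma uncountable_image_escapes {V W : Type} (S : W -> Prop) (g : V -> W) :
  ~ countable_set (fun _ : V => True) -> injective g -> countable_set S ->
  exists v, ~ S (g v).
Proof.
  intros Hunc Hg HS. apply NNPP; intros Hall. apply Hunc.
  destruct (countable_preimage S g Hg HS) as [h Hh].
  exists h. intros v v' _ _ E.
  apply Hh; trivial; apply NNPP; intros Hv; apply Hall; eauto.
Qed.

Section PrikryMatrix.

Variables (K W : Type) (ltW : W -> W -> Prop) (A : K -> W -> W -> Prop).
Hypothesis Hmatrix : prikry_matrix ltW A.
Hypothesis ltW_total : forall x y, ltW x y \/ x = y \/ ltW y x.

Lemma prikry_columns_disjoint (a : K) (e0 e1 x : W) :
  e0 <> e1 -> A a e0 x -> A a e1 x -> False.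
Proof.
  destruct Hmatrix as [Hdisj _]. intros Hne H0 H1.
  destruct (ltW_total e0 e1) as [Hlt | [Heq | Hlt]]; eauto.
Qed.

Lemma prikry_column_meets_image (f : nat -> K) (g : W -> W) (e : W) :
  ~ countable_set (fun _ : W => True) -> injective f -> injective g ->
  exists n v, A (f n) e (g v).
Proof.
  destruct Hmatrix as [_ [_ Hcofin]]. intros Hunc Hf Hg.
  destruct (uncountable_image_escapes _ g Hunc Hg (Hcofin f (fun _ => e) Hf))
    as [v Hv].
  apply NNPP in Hv. destruct Hv as [n Hn]. eauto.
Qed.

Definition column_colouring (e0 : W) (a : K) (x : W) : bool :=
  if excluded_middle_informative (A a e0 x) then true else false.

Lemma column_colouring_not_constant (e0 e1 : W) (f : nat -> K) (g : W -> W) :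
  ~ countable_set (fun _ : W => True) -> e0 <> e1 ->
  injective f -> injective g ->
  ~ exists i, forall n v, column_colouring e0 (f n) (g v) = i.
Proof.
  intros Hunc Hne Hf Hg [[|] Hconst].
  - destruct (prikry_column_meets_image f g e1 Hunc Hf Hg) as [n [v H1]].
    specialize (Hconst n v). unfold column_colouring in Hconst.
    destruct (excluded_middle_informative _) as [H0 | _]; [| discriminate].
    exact (prikry_columns_disjoint _ _ _ _ Hne H0 H1).
  - destruct (prikry_column_meets_image f g e0 Hunc Hf Hg) as [n [v H0]].
    specialize (Hconst n v). unfold column_colouring in Hconst.
    destruct (excluded_middle_informative _); [discriminate | contradiction].
Qed.

End PrikryMatrix.

Theorem claim2p3 (K W : Type) (ltK : K -> K -> Prop) (ltW : W -> W -> Prop) :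
  is_omega1 ltW ->
  is_regular_cardinal_ge_aleph2 ltK ltW ->
  (exists A : K -> W -> W -> Prop, prikry_matrix ltW A) ->
  not_polarized_arrow ltK ltW.
Proof.
  intros [[Wirr [_ [Wtri _]]] [Wunc _]] [[Kirr _] _] [A Hmatrix].
  destruct (uncountable_two_points Wunc) as [e0 [e1 Hne]].
  exists (column_colouring K W A e0).
  intros X Y [f [Hf HX]] [g [Hg HY]] [i Hi].
  apply (column_colouring_not_constant K W ltW A Hmatrix Wtri e0 e1 f g
           Wunc Hne).
  - exact (strict_mono_injective lt ltK f Nat.lt_trichotomy Kirr Hf).
  - exact (strict_mono_injective ltW ltW g Wtri Wirr Hg).
  - exists i. intros n v. apply Hi; [apply HX | apply HY]; eauto.
Qed.
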